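(* Let $n=2$ and $\varphi\in\mathcal{M}$ be a matching. Then there exists a matching mechanism that is resolute, $\langle\varphi\rangle$-symmetric and stable.
   Context: Let $W=\{1,2\}$ (women), $M=\{3,4\}$ (men), $I=W\cup M$. Permutations compose right-to-left. A preference profile is a function $p$ on $I$ assigning to each $x\in W$ a linear order $p(x)$ on $M$ and to each $y\in M$ a linear order $p(y)$ on $W$; $\mathcal{P}$ is the set of preference profiles. A matching is a permutation $\mu$ of $I$ with $\mu(W)=M$, $\mu(M)=W$ and $\mu(\mu(z))=z$ for all $z\in I$; $\mathcal{M}$ is the set of matchings. $\mu$ is stable for $p$ if there is no $(x,y)\in W\times M$ with $y\succ_{p(x)}\mu(x)$ and $x\succ_{p(y)}\mu(y)$. Let $G^*=\{\psi\in\mathrm{Sym}(I):\{\psi(W),\psi(M)\}=\{W,M\}\}$. For a linear order $R$ on $X\subseteq I$ and $\psi\in\mathrm{Sym}(I)$, $\psi R$ is the relation on $\psi(X)$ with $(a,b)\in\psi R$ iff $(\psi^{-1}(a),\psi^{-1}(b))\in R$. For $p\in\mathcal{P}$, $\psi\in G^*$, $p^\psi(z)=\psi\,p(\psi^{-1}(z))$. For a permutation $\mu$, $\mu^\psi=\psi\mu\psi^{-1}$; $S^\psi=\{\mu^\psi:\mu\in S\}$. A matching mechanism is a correspondence $F$ from $\mathcal{P}$ to $\mathcal{M}$; it is resolute if $|F(p)|=1$ for all $p$; stable if every element of $F(p)$ is stable for $p$, for all $p$; for $U\subseteq G^*$ it is $U$-symmetric if $F(p^\psi)=F(p)^\psi$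 for all $p\in\mathcal{P}$, $\psi\in U$. $\langle\varphi\rangle=\{id_I,\varphi\}$. *)

From HB Require Import structures.
From mathcomp Require Import all_boot fingroup perm.
Set Implicit Arguments. Unset Strict Implicit. Unset Printing Implicit Defensive.

(* Agents: I = {1,2,3,4} is encoded as 'I_4, paper's agent k being ordinal k-1.
   Women W = {1,2} ~ {0,1}, men M = {3,4} ~ {2,3}. *)
Definition I := 'I_4.
Definition W : {set I} := [set i : I | (i < 2)%N].
Definition M : {set I} := [set i : I | (2 <= i)%N].

Definition linear_order_on (X : {set I}) (R : rel I) : Prop :=
  [/\ (forall a b, R a b -> a \in X /\ b \in X),
      (forall a, a \in X -> R a a),
      (forall a b, R a b -> R b a -> a = b),
      (forall a b c, R a b -> R b c -> R a c)
    & (forall a b, a \in X -> b \in X -> R a b \/ R b a)].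

Definition strictly (R : rel I) (a b : I) : bool := R a b && (a != b).

Definition profile := I -> rel I.
Definition is_profile (p : profile) : Prop :=
  (forall x, x \in W -> linear_order_on M (p x)) /\
  (forall y, y \in M -> linear_order_on W (p y)).

Definition is_matching (mu : {perm I}) : Prop :=
  [/\ mu @: W = M, mu @: M = W & forall z, mu (mu z) = z].

Definition stable (p : profile) (mu : {perm I}) : Prop :=
  ~ (exists x y, [/\ x \in W, y \in M,
                     strictly (p x) y (mu x) & strictly (p y) x (mu y)]).

Definition Gstar : {set {perm I}} :=
  [set psi : {perm I} | [set psi @: W; psi @: M] == [set W; M]].

Definition act_rel (psi : {perm I}) (R : rel I) : rel I :=
  fun a b => R (psi^-1%g a) (psi^-1%g b).

Definition act_profile (psi : {perm I}) (p : profile) : profile :=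
  fun z => act_rel psi (p (psi^-1%g z)).

(* mu^psi = psi mu psi^-1 (right-to-left composition).  MathComp's product
   of permutations is left-to-right, so this is (psi^-1 * mu * psi)%g. *)
Definition conjm (psi mu : {perm I}) : {perm I} := (psi^-1 * mu * psi)%g.

Lemma conjmE psi mu z : conjm psi mu z = psi (mu (psi^-1%g z)).
Proof. by rewrite /conjm !permM. Qed.

Definition conjset (psi : {perm I}) (S : {set {perm I}}) : {set {perm I}} :=
  [set conjm psi mu | mu in S].

Definition mechanism := profile -> {set {perm I}}.

Definition is_mechanism (F : mechanism) : Prop :=
  forall p, is_profile p -> forall mu, mu \in F p -> is_matching mu.

Definition resolute (F : mechanism) : Prop :=
  forall p, is_profile p -> #|F p| = 1%N.

Definition stable_mech (F : mechanism) : Prop :=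
  forall p, is_profile p -> forall mu, mu \in F p -> stable p mu.

Definition U_symmetric (U : {set {perm I}}) (F : mechanism) : Prop :=
  forall p psi, is_profile p -> psi \in U ->
    F (act_profile psi p) = conjset psi (F p).

Definition gen2 (phi : {perm I}) : {set {perm I}} := [set 1%g; phi].

(** There are only two matchings of two women and two men, [mu13] (pairing
    agents 1-3 and 2-4) and [mu14] (pairing 1-4 and 2-3), and they commute.
    At least one of them is stable: a blocking pair of one matching is a pair
    of the other one, both of whose members strictly prefer their partner in
    the other matching; a blocking pair of [mu13] and one of [mu14] always
    share an agent, who would then strictly prefer each of his two possible
    partners to the other.  The mechanism picks [mu13] when it is stable and
    [mu14] otherwise.  Stability is invariant under [G*], the blocking pairs
    of [(p^psi, mu^psi)] being the images under [psi] of those of [(p, mu)];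
    since [phi] is one of the two commuting matchings, conjugation by [phi]
    fixes both of them, so the choice is [<phi>]-symmetric. *)

From mathcomp Require Import all_boot fingroup perm.

Set Implicit Arguments.
Unset Strict Implicit.
Unset Printing Implicit Defensive.

Lemma in_M (z : I) : (z \in M) = (z \notin W).
Proof. by rewrite !inE -leqNgt. Qed.

Lemma profile_antisym p z a b : is_profile p -> p z a b -> p z b a -> a = b.
Proof.
move=> [pW pM]; case zW: (z \in W).
  by have [_ _ anti _ _] := pW z zW; exact: anti.
have zM : z \in M by rewrite in_M zW.
by have [_ _ anti _ _] := pM z zM; exact: anti.
Qed.

Lemma strictly_asym p z a b :
  is_profile p -> strictly (p z) a b -> strictly (p z) b a -> False.
Proof.
move=> pP /andP[ab a_neq_b] /andP[ba _].
by rewrite (profile_antisym pP ab ba) eqxx in a_neq_b.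
Qed.

Definition blocks (p : profile) (mu : {perm I}) (a b : I) : bool :=
  strictly (p a) b (mu a) && strictly (p b) a (mu b).

Lemma blocksC p mu a b : blocks p mu a b = blocks p mu b a.
Proof. exact: andbC. Qed.

Lemma blocks_act psi p mu a b :
  blocks (act_profile psi p) (conjm psi mu) (psi a) (psi b) = blocks p mu a b.
Proof.
by rewrite /blocks /strictly /act_profile /act_rel !conjmE !permK !(inj_eq perm_inj).
Qed.

Definition stableb (p : profile) (mu : {perm I}) : bool :=
  [forall x in W, forall y in M, ~~ blocks p mu x y].

Lemma stableP p mu : reflect (stable p mu) (stableb p mu).
Proof.
apply: (iffP forall_inP) => [H [x [y [xW yM px py]]] | H x xW].
  by have /forall_inP/(_ y yM) := H x xW; rewrite /blocks px py.
apply/forall_inP => y yM; apply/negP => /andP[px py].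
by apply: H; exists x, y.
Qed.

Definition cross (x y : I) : bool := (x \in W) (+) (y \in W).

Lemma stableb_cross p mu :
  stableb p mu = [forall x, forall y, cross x y ==> ~~ blocks p mu x y].
Proof.
apply/forall_inP/forallP => [H x | H x xW].
  apply/forallP => y; apply/implyP; rewrite /cross.
  case xW: (x \in W) => /= yW.
    by have /forall_inP := H x xW; apply; rewrite in_M.
  by rewrite blocksC; have /forall_inP := H y yW; apply; rewrite in_M xW.
apply/forall_inP => y yM; have /forallP/(_ y)/implyP := H x; apply.
by rewrite /cross xW /= -in_M.
Qed.

Lemma Gstar_cross psi x y : psi \in Gstar -> cross (psi x) (psi y) = cross x y.
Proof.
rewrite inE => /eqP Gpsi.
have : psi @: W \in [set W; M] by rewrite -Gpsi !inE eqxx.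
rewrite !inE => /orP[/eqP psiW | /eqP psiW].
  have side z : (psi z \in W) = (z \in W).
    by rewrite -{1}psiW mem_imset //; exact: perm_inj.
  by rewrite /cross !side.
have side z : (psi z \in W) = ~~ (z \in W).
  by rewrite -[LHS]negbK -in_M -psiW mem_imset //; exact: perm_inj.
by rewrite /cross !side addbN addNb negbK.
Qed.

Lemma stableb_act psi p mu :
  psi \in Gstar -> stableb (act_profile psi p) (conjm psi mu) = stableb p mu.
Proof.
move=> Gpsi; rewrite !stableb_cross.
apply/forallP/forallP => H x; apply/forallP => y.
  by have /forallP/(_ (psi y)) := H (psi x); rewrite Gstar_cross // blocks_act.
rewrite -(permKV psi x) -(permKV psi y) Gstar_cross // blocks_act.
exact: (forallP (H _)).
Qed.

Lemma matching_of_involution (mu : {perm I}) :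
  (forall z, mu (mu z) = z) -> (forall z, (mu z \in M) = (z \in W)) ->
  is_matching mu.
Proof.
move=> muK muM.
have muW z : (mu z \in W) = (z \in M) by rewrite in_M -muM muK -in_M.
split=> //; apply/setP => y; apply/imsetP/idP => [[x xA ->] | yB].
- by rewrite muM.
- by exists (mu y); rewrite ?muW ?muK.
- by rewrite muW.
- by exists (mu y); rewrite ?muM ?muK.
Qed.

Lemma matching_eq_on_W (mu nu : {perm I}) :
  is_matching mu -> is_matching nu -> {in W, mu =1 nu} -> mu = nu.
Proof.
move=> [_ _ muK] [_ nuMW nuK] eq_muW; apply/permP => z.
case zW: (z \in W); first exact: eq_muW.
have nuzW : nu z \in W by rewrite -nuMW imset_f // in_M zW.
by apply: (@perm_inj _ mu); rewrite muK eq_muW // nuK.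
Qed.

Lemma conjm_commute (psi mu : {perm I}) : commute psi mu -> conjm psi mu = mu.
Proof. by move=> psi_mu; rewrite /conjm -mulgA -psi_mu mulKg. Qed.

(* Agent [k] of the paper is the ordinal [k - 1]: [mu13 z = z + 2 mod 4] and
   [mu14 z = 3 - z]. *)
Definition mu13 : {perm I} := perm (inj_comp (@ordS_inj 4) (@ordS_inj 4)).
Definition mu14 : {perm I} := perm (@rev_ord_inj 4).

Lemma mu13_matching : is_matching mu13.
Proof.
apply: matching_of_involution => z.
  by apply/val_inj; rewrite !permE; case: z => -[|[|[|[|//]]]] ?.
by rewrite !permE !inE; case: z => -[|[|[|[|//]]]] ?.
Qed.

Lemma mu14_matching : is_matching mu14.
Proof.
apply: matching_of_involution => z.
  by apply/val_inj; rewrite !permE; case: z => -[|[|[|[|//]]]] ?.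
by rewrite !permE !inE; case: z => -[|[|[|[|//]]]] ?.
Qed.

Lemma commute_mu13_mu14 : commute mu13 mu14.
Proof.
by apply/permP => z; apply/val_inj; rewrite !permM !permE; case: z => -[|[|[|[|//]]]] ?.
Qed.

Lemma M_eq_mu13_or_mu14 x y :
  x \in W -> y \in M -> (y == mu13 x) || (y == mu14 x).
Proof.
by rewrite !permE !inE; case: x => -[|[|[|[|//]]]] ?; case: y => -[|[|[|[|//]]]] ?.
Qed.

Lemma W_eq_or_mu14_eq_mu13 x x' :
  x \in W -> x' \in W -> (x == x') || (mu14 x == mu13 x').
Proof.
by rewrite !permE !inE; case: x => -[|[|[|[|//]]]] ?; case: x' => -[|[|[|[|//]]]] ?.
Qed.

Lemma matching_cases mu : is_matching mu -> mu = mu13 \/ mu = mu14.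
Proof.
move=> mu_match; have [muWM _ _] := mu_match.
have muM x : x \in W -> mu x \in M by move=> xW; rewrite -muWM imset_f.
case: (boolP [forall x in W, mu x == mu13 x]) => [/forall_inP eq13 | ].
  by left; apply: (matching_eq_on_W mu_match mu13_matching) => x /eq13/eqP.
move=> /forall_inPn[x xW neq13]; right.
apply: (matching_eq_on_W mu_match mu14_matching) => x' x'W.
have /orP[/eqP eq13' | /eqP //] := M_eq_mu13_or_mu14 x'W (muM x' x'W).
have /orP[/eqP eq13 | /eqP eq14] := M_eq_mu13_or_mu14 xW (muM x xW).
  by rewrite -eq13 eqxx in neq13.
have /orP[/eqP xx' | /eqP meet] := W_eq_or_mu14_eq_mu13 xW x'W.
  by rewrite xx' -eq13' eqxx in neq13.
move: meet; rewrite -eq14 -eq13' => /perm_inj xx'.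
by rewrite xx' -eq13' eqxx in neq13.
Qed.

Lemma matchings_commute mu nu : is_matching mu -> is_matching nu -> commute mu nu.
Proof.
move=> /matching_cases[]-> /matching_cases[]->; rewrite ?commute_refl //.
  exact: commute_mu13_mu14.
exact: commute_sym commute_mu13_mu14.
Qed.

Lemma blocks_other p (mu nu : {perm I}) x y :
  (y == mu x) || (y == nu x) -> blocks p mu x y -> y = nu x.
Proof. by case/orP=> [/eqP-> /andP[/andP[_]]|/eqP//]; rewrite eqxx. Qed.

Lemma blocks_partner p mu (nu : {perm I}) x y :
  nu (nu x) = x -> y = nu x -> blocks p mu x y ->
  strictly (p x) (nu x) (mu x) /\ strictly (p y) (nu y) (mu y).
Proof. by move=> nuK -> /andP[]; rewrite nuK. Qed.

Lemma stableb_mu13_or_mu14 p : is_profile p -> stableb p mu13 || stableb p mu14.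
Proof.
move=> pP; have [_ _ mu13K] := mu13_matching; have [_ _ mu14K] := mu14_matching.
rewrite -[_ || _]negbK negb_or; apply/negP => /andP[].
move=> /forall_inPn[x xW /forall_inPn[y yM /negbNE b13]].
move=> /forall_inPn[x' x'W /forall_inPn[y' y'M /negbNE b14]].
have y14 := blocks_other (M_eq_mu13_or_mu14 xW yM) b13.
have y'13 : y' = mu13 x'.
  by apply: blocks_other b14; rewrite orbC M_eq_mu13_or_mu14.
have [px py] := blocks_partner (mu14K x) y14 b13.
have [px' py'] := blocks_partner (mu13K x') y'13 b14.
have /orP[/eqP xx' | /eqP meet] := W_eq_or_mu14_eq_mu13 xW x'W.
  by subst x'; exact: strictly_asym pP px px'.
by rewrite y'13 -meet -y14 in py'; exact: strictly_asym pP py py'.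
Qed.

Lemma gen2_Gstar phi : is_matching phi -> gen2 phi \subset Gstar.
Proof.
move=> [phiW phiM _]; apply/subsetP => psi; rewrite !inE => /orP[]/eqP-> /=.
  by rewrite !(eq_imset _ (@perm1 _)) !imset_id.
by rewrite phiW phiM setUC.
Qed.

Lemma conjm_gen2_fixed phi psi mu :
  is_matching phi -> is_matching mu -> psi \in gen2 phi -> conjm psi mu = mu.
Proof.
move=> phi_match mu_match; rewrite !inE => /orP[]/eqP->; apply: conjm_commute.
  exact: commute_sym (commute1 mu).
exact: matchings_commute.
Qed.

Definition stable_choice (p : profile) : {perm I} :=
  if stableb p mu13 then mu13 else mu14.

Lemma stable_choice_matching p : is_matching (stable_choice p).
Proof.
by rewrite /stable_choice; case: ifP => _; [exact: mu13_matching | exact: mu14_matching].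
Qed.

Lemma stable_choice_stable p : is_profile p -> stable p (stable_choice p).
Proof.
move=> pP; apply/stableP; rewrite /stable_choice.
by have := stableb_mu13_or_mu14 pP; case: ifP => // ->.
Qed.

Lemma stable_choice_act psi p :
  psi \in Gstar -> conjm psi mu13 = mu13 ->
  stable_choice (act_profile psi p) = stable_choice p.
Proof. by move=> Gpsi fix13; rewrite /stable_choice -{1}fix13 stableb_act. Qed.

Theorem theorem7 (phi : {perm I}) (Hphi : is_matching phi) :
  exists F : mechanism,
    [/\ is_mechanism F, resolute F, U_symmetric (gen2 phi) F & stable_mech F].
Proof.
exists (fun p => [set stable_choice p]); split.
- by move=> p _ mu; rewrite inE => /eqP->; exact: stable_choice_matching.
- by move=> p _; rewrite cards1.
- move=> p psi _ psi_phi.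
  have Gpsi : psi \in Gstar by exact: subsetP (gen2_Gstar Hphi) psi psi_phi.
  have fixes mu : is_matching mu -> conjm psi mu = mu.
    by move=> mu_match; exact: conjm_gen2_fixed Hphi mu_match psi_phi.
  have fix13 := fixes _ mu13_matching.
  rewrite /conjset imset_set1 fixes ?stable_choice_act //.
  exact: stable_choice_matching.
- by move=> p pP mu; rewrite inE => /eqP->; exact: stable_choice_stable.
Qed.
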